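(* Let $d\ge 5$. If every configuration in $Q^3_{d-1}$ of type $\varphi_1$, $\varphi_2$, $\varphi_3$ or $\varphi_4$ (with dimension $d-1$) is covered, then every configuration in $Q^3_d$ of type $t_1(d)$, $t_2(d)$, $t_3(d)$, $t_4(d)$ or $t_5(d)$ is covered.
   Context: For $n\in\mathbb{N}_0$, $Q^3_n$ is the $3$-uniform hypergraph on $V_n=\{0,1,2\}^n$ whose edges are the triples of pairwise distinct sequences agreeing in $n-1$ coordinates. A loose path from $v_0$ to $v_{2\ell}$ consists of distinct vertices $v_0,\dots,v_{2\ell}$ and distinct edges $e_i=\{v_{2i-2},v_{2i-1},v_{2i}\}$, $i=1,\dots,\ell$. A configuration in $Q^3_n$ is an ordered $4$-tuple $(a,b,x,y)$ of pairwise distinct vertices of $V_n$; it is covered if there is a loose path in $Q^3_n$ from $a$ to $b$ whose vertex set is exactly $V_n\setminus\{x,y\}$. For $v\in V_n$ write $v_i$ for its $i$-th coordinate and $v_{[k]}=(v_1,\dots,v_k)$. A symmetry is a bijection of $V_n$ obtained by permuting the coordinates and, independently in each coordinate, permuting the values $\{0,1,2\}$. A configuration $c=(a,b,x,y)$ in $Q^3_n$ is of a given type if, after applying some symmetry to all four vertices and possibly interchanging $x$ and $y$, the resulting configuration (still denoted $(a,b,x,y)$) satisfies (with $n$ the dimension): $t_1(n)$: $a_n=x_n=0$, $b_n=1$, $y_n=2$, and $a_{[n-1]}\notin\{b_{[n-1]},x_{[n-1]},y_{[n-1]}\}$; $t_2(n)$: $a_n=b_n=0$, $x_n=1$, $y_n=2$,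 and $a_{[n-1]}\notin\{b_{[n-1]},x_{[n-1]},y_{[n-1]}\}$; $t_3(n)$: $a_n=x_n=0$ and $b_n=y_n=1$; $t_4(n)$: $a_n=0$, $b_n=x_n=1$, $y_n=2$, and $b_{[n-1]}\notin\{a_{[n-1]},x_{[n-1]},y_{[n-1]}\}$; $t_5(n)$: $a_n=b_n=0$, $x_n=1$, $y_n=2$, and $b_{[n-1]}\notin\{a_{[n-1]},x_{[n-1]},y_{[n-1]}\}$; $\varphi_1$: the $t_1(n)$ conditions hold and there is $i\in[n-1]$ with $b_i\in\{a_i,x_i,y_i\}$; $\varphi_2$: the $t_2(n)$ or the $t_5(n)$ conditions hold and there are two distinct $i,i'\in[n-1]$, $u\in\{a,b\}$, $w\in\{x,y\}$ with $u_i=w_i$ and $u_{i'}=w_{i'}$; $\varphi_3$: the $t_3(n)$ conditions hold and there is $i\in[n-1]$ with $a_i=y_i$ or $b_i=x_i$; $\varphi_4$: the $t_4(n)$ conditions hold and there is $i\in[n-1]$ with $a_i\in\{b_i,x_i,y_i\}$. *)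

From HB Require Import structures.
From mathcomp Require Import all_boot fingroup perm.
Set Implicit Arguments. Unset Strict Implicit. Unset Printing Implicit Defensive.

(* Vertices of Q^3_m : sequences in {0,1,2}^m, coordinates indexed by 'I_m
   (paper's coordinate i in [m] is our index i-1). *)
Definition V (m : nat) := {ffun 'I_m -> 'I_3}.

Definition c0 : 'I_3 := @Ordinal 3 0 isT.
Definition c1 : 'I_3 := @Ordinal 3 1 isT.
Definition c2 : 'I_3 := @Ordinal 3 2 isT.

Definition is_edge (m : nat) (u v w : V m) : Prop :=
  [/\ u != v, v != w, u != w &
      exists i : 'I_m, forall j : 'I_m, j != i -> u j = v j /\ v j = w j].

Definition path_edge (m : nat) (d : V m) (s : seq (V m)) (i : nat) : {set V m} :=
  [set nth d s (2 * i); nth d s (2 * i).+1; nth d s (2 * i).+2].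

Definition loose_path (m : nat) (a b : V m) (s : seq (V m)) : Prop :=
  [/\ odd (size s), nth a s 0 = a, last a s = b & uniq s] /\
  [/\ (forall i, i < (size s)./2 ->
         is_edge (nth a s (2 * i)) (nth a s (2 * i).+1) (nth a s (2 * i).+2)) &
      (forall i j, i < j -> j < (size s)./2 -> path_edge a s i != path_edge a s j)].

Definition config (m : nat) (a b x y : V m) : Prop :=
  [/\ a != b, a != x & a != y] /\ [/\ b != x, b != y & x != y].

Definition covered (m : nat) (a b x y : V m) : Prop :=
  exists s : seq (V m), loose_path a b s /\
    (forall v : V m, v \in s = (v != x) && (v != y)).

Definition sym (m : nat) (sg : {perm 'I_m}) (p : {ffun 'I_m -> {perm 'I_3}})
  (v : V m) : V m := [ffun i => p i (v (sg i))].

Definition of_type (m : nat) (P : V m -> V m -> V m -> V m -> Prop)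
  (a b x y : V m) : Prop :=
  exists (sg : {perm 'I_m}) (p : {ffun 'I_m -> {perm 'I_3}}),
    let g := sym sg p in
    P (g a) (g b) (g x) (g y) \/ P (g a) (g b) (g y) (g x).

(* Conditions in dimension m.+1 (the paper's n = m+1): the last coordinate is
   ord_max, and v_{[n-1]} is the restriction to the first m coordinates. *)
Definition lst (m : nat) (v : V m.+1) : 'I_3 := v ord_max.
Definition pre (m : nat) (v : V m.+1) : V m :=
  [ffun i : 'I_m => v (widen_ord (leqnSn m) i)].
Definition co (m : nat) (v : V m.+1) (i : 'I_m) : 'I_3 :=
  v (widen_ord (leqnSn m) i).

Definition t1 (m : nat) (a b x y : V m.+1) : Prop :=
  [/\ lst a = c0, lst x = c0, lst b = c1, lst y = c2 &
      pre a \notin [:: pre b; pre x; pre y]].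
Definition t2 (m : nat) (a b x y : V m.+1) : Prop :=
  [/\ lst a = c0, lst b = c0, lst x = c1, lst y = c2 &
      pre a \notin [:: pre b; pre x; pre y]].
Definition t3 (m : nat) (a b x y : V m.+1) : Prop :=
  [/\ lst a = c0, lst x = c0, lst b = c1 & lst y = c1].
Definition t4 (m : nat) (a b x y : V m.+1) : Prop :=
  [/\ lst a = c0, lst b = c1, lst x = c1, lst y = c2 &
      pre b \notin [:: pre a; pre x; pre y]].
Definition t5 (m : nat) (a b x y : V m.+1) : Prop :=
  [/\ lst a = c0, lst b = c0, lst x = c1, lst y = c2 &
      pre b \notin [:: pre a; pre x; pre y]].

Definition phi1 (m : nat) (a b x y : V m.+1) : Prop :=
  t1 a b x y /\ exists i : 'I_m, co b i \in [:: co a i; co x i; co y i].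
Definition phi2 (m : nat) (a b x y : V m.+1) : Prop :=
  (t2 a b x y \/ t5 a b x y) /\
  exists (i i' : 'I_m) (u w : V m.+1),
    [/\ i != i', u \in [:: a; b], w \in [:: x; y],
        co u i = co w i & co u i' = co w i'].
Definition phi3 (m : nat) (a b x y : V m.+1) : Prop :=
  t3 a b x y /\ exists i : 'I_m, co a i = co y i \/ co b i = co x i.
Definition phi4 (m : nat) (a b x y : V m.+1) : Prop :=
  t4 a b x y /\ exists i : 'I_m, co a i \in [:: co b i; co x i; co y i].

From HB Require Import structures.
From mathcomp Require Import all_boot fingroup perm zify.
Set Implicit Arguments. Unset Strict Implicit. Unset Printing Implicit Defensive.

(* Write a vertex of Q^3_d as a vertex of Q^3_{d-1} together with its last
   coordinate c: Q^3_d is made of three layers c = 0, 1, 2, each a copy of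
   Q^3_{d-1}, joined by the vertical edges {(v,0), (v,1), (v,2)}.  For a
   configuration of type t1, t2 or t3 we pick auxiliary vertices P, Q of
   Q^3_{d-1} such that three configurations of Q^3_{d-1} built from the
   prefixes of a, b, x, y and from P, Q are of type phi1, ..., phi4, hence
   covered; their covering paths, laid in the three layers and joined by the
   vertical edges through (the prefix of) a, P and Q, cover Q^3_d minus x and y.
   The phi-conditions only involve three coordinates separating a from b, x and
   y, so up to a renaming of values there are 14^3 cases, each settled by one
   of four explicit candidates (P, Q) found by a finite search.  Types t4 and t5
   reduce to t1 and t2 by a symmetry and reversing the path.  Finally, the
   concatenation is a path because it visits all 3^d - 2 vertices and has at
   most that many entries. *)

Definition glue (T : Type) (s t : seq T) := s ++ behead t.

Lemma size_glue (T : Type) (s t : seq T) : size (glue s t) = size s + (size t).-1.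
Proof. by rewrite size_cat size_behead. Qed.

Section LooseWalks.
Variable m : nat.
Implicit Types (a b c u v w x y : V m) (s t : seq (V m)).

Lemma is_edge_rev u v w : is_edge u v w -> is_edge w v u.
Proof. by case=> uv vw uw [i Hi]; split; rewrite 1?eq_sym //; exists i => j /Hi [-> ->]. Qed.

Inductive lwalk : V m -> V m -> seq (V m) -> Prop :=
| lwalk_edge u v w : is_edge u v w -> lwalk u w [:: u; v; w]
| lwalk_cons u v w b s : is_edge u v w -> lwalk w b s -> lwalk u b [:: u, v & s].

Lemma lwalk_head a b s : lwalk a b s -> s = a :: behead s.
Proof. by case. Qed.

Lemma lwalk_last a b s : lwalk a b s -> last a s = b.
Proof. by elim=> //= u v w b' t _ /lwalk_head -> <-. Qed.

Lemma lwalk_mem_last a b s : lwalk a b s -> b \in s.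
Proof. by elim=> [u v w|u v w b' t _ _ IH] *; rewrite !inE ?eqxx ?IH ?orbT. Qed.

Lemma lwalk_odd a b s : lwalk a b s -> odd (size s).
Proof. by elim=> //= u v w b' t _ _; rewrite negbK. Qed.

Lemma lwalk_glue a c b s t : lwalk a c s -> lwalk c b t -> lwalk a b (glue s t).
Proof.
elim=> [u v w E|u v w c' s' E _ IH] Ht; last exact: lwalk_cons E (IH Ht).
by rewrite /glue /= -(lwalk_head Ht); apply: lwalk_cons E Ht.
Qed.

Lemma mem_glue a c b s t z : lwalk a c s -> lwalk c b t ->
  (z \in glue s t) = (z \in s) || (z \in t).
Proof.
move=> Hs Ht; have cs := lwalk_mem_last Hs.
rewrite /glue mem_cat {2}(lwalk_head Ht) inE.
by case: (z =P c) => [->|]; rewrite ?cs ?orbF.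
Qed.

Lemma size_lwalk a b s : lwalk a b s -> 2 < size s.
Proof. by case=> // u v w b' t _ /lwalk_head ->. Qed.

Lemma lwalk_rev a b s : lwalk a b s -> lwalk b a (rev s).
Proof.
elim=> [u v w E|u v w b' t E _ IH]; first exact/lwalk_edge/is_edge_rev.
have -> : rev [:: u, v & t] = glue (rev t) [:: w; v; u].
  by rewrite /glue !rev_cons -!cats1 -catA.
exact: lwalk_glue IH (lwalk_edge (is_edge_rev E)).
Qed.

Lemma lwalk_nth_edge a b s d i : lwalk a b s -> i < (size s)./2 ->
  is_edge (nth d s (2 * i)) (nth d s (2 * i).+1) (nth d s (2 * i).+2).
Proof.
move=> H; elim: H i => [u v w E|u v w b' t E Ht IH] [|i] //.
  by rewrite (lwalk_head Ht).
by rewrite mulnS; apply: IH.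
Qed.

Lemma lwalk_of_edges d s : 1 < size s -> odd (size s) ->
  (forall i, i < (size s)./2 ->
     is_edge (nth d s (2 * i)) (nth d s (2 * i).+1) (nth d s (2 * i).+2)) ->
  lwalk (head d s) (last d s) s.
Proof.
have [k] := ubnP (size s); elim: k s => // k IH [|u [|v [|w t]]] // /ltnSE sk _ odd_s E.
have E0 : is_edge u v w := E 0 isT.
case: t => [|w' t'] in sk odd_s E *; first exact: lwalk_edge E0.
apply: lwalk_cons E0 (IH (w :: w' :: t') _ isT _ _) => [||i Hi] //=.
- by move: sk => /=; lia.
- by move: odd_s => /=; rewrite !negbK.
- by have := E i.+1; rewrite mulnS; apply.
Qed.

Lemma path_edge_neq d s i j : odd (size s) -> uniq s -> i < j -> j < (size s)./2 ->
  path_edge d s i != path_edge d s j.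
Proof.
move=> os us ij js; apply/negP => /eqP E.
have : nth d s (2 * i).+1 \in path_edge d s j by rewrite -E !inE eqxx orbT.
have hs : size s = (size s)./2 * 2 + 1 by rewrite -{1}(odd_double_half (size s)) os -muln2 addnC.
move: hs js; set h := (size s)./2 => hs js.
by rewrite !inE !nth_uniq //; try rewrite hs; lia.
Qed.

Lemma loose_pathP a b s : a != b -> loose_path a b s <-> lwalk a b s /\ uniq s.
Proof.
move=> ab; split=> [[[os s0 sl us] [E _]]|[H us]].
  have s1 : 1 < size s.
    by case: s os s0 sl {us E} => [|u [|v t]] //= _ -> ba; rewrite ba eqxx in ab.
  by split=> //; have := lwalk_of_edges s1 os E; rewrite -nth0 s0 sl.
have os := lwalk_odd H; split; split=> //.
- by rewrite (lwalk_head H).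
- exact: lwalk_last H.
- by move=> i; apply: lwalk_nth_edge H.
- by move=> i j; apply: path_edge_neq.
Qed.

(* The size bound forces every vertex other than [x], [y] to be visited exactly
   once. *)
Definition spans a b x y s :=
  [/\ lwalk a b s, size s <= #|V m| - 2 & forall v, [|| v \in s, v == x | v == y]].

Lemma card_but2 x y : x != y -> #|[pred v | (v != x) && (v != y)]| = #|V m| - 2.
Proof.
move=> xy; have -> : #|[pred v | (v != x) && (v != y)]| = #|[predC pred2 x y]|.
  by apply: eq_card => v; rewrite !inE negb_or.
by rewrite -(cardC (pred2 x y)) card2 xy addKn.
Qed.

Lemma coveredP a b x y : a != b -> x != y -> covered a b x y <-> exists s, spans a b x y s.
Proof.
move=> ab xy; split=> [[s [/(loose_pathP _ ab) [H us] M]]|[s [H sz M]]].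
  exists s; split=> // [|v]; last by rewrite M; case: eqP; case: eqP.
  rewrite -(card_uniqP us) -(card_but2 xy); apply/eq_leq/eq_card => v.
  by rewrite M.
set S := enum [pred v | (v != x) && (v != y)].
have sub : {subset S <= s}.
  move=> v; rewrite mem_enum inE => /andP [vx vy].
  by case/or3P: (M v) => // /eqP vE; [move: vx | move: vy]; rewrite vE eqxx.
have sz' : size s <= size S by rewrite -cardE card_but2.
exists s; split.
  by apply/(loose_pathP _ ab); split=> //; apply: leq_size_uniq (enum_uniq _) sub sz'.
by move=> v; have [_ <-] := uniq_min_size (enum_uniq _) sub sz'; rewrite mem_enum.
Qed.

Lemma spans_rev a b x y s : spans a b x y s -> spans b a x y (rev s).
Proof.
by case=> H sz M; split; rewrite ?size_rev //; [apply: lwalk_rev | move=> v; rewrite mem_rev].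
Qed.

End LooseWalks.

Lemma lwalk_map m m' (f : V m -> V m') a b s :
  (forall u v w, is_edge u v w -> is_edge (f u) (f v) (f w)) ->
  lwalk a b s -> lwalk (f a) (f b) (map f s).
Proof.
by move=> fe; elim=> [u v w /fe | u v w b' t /fe E _ IH];
  [apply: lwalk_edge | apply: lwalk_cons E IH].
Qed.

Lemma spans_map m (f : V m -> V m) a b x y s : injective f ->
  (forall u v w, is_edge u v w -> is_edge (f u) (f v) (f w)) ->
  spans a b x y s -> spans (f a) (f b) (f x) (f y) (map f s).
Proof.
move=> fi fe [H sz M]; split; rewrite ?size_map //; first exact: lwalk_map.
by move=> v; rewrite -(f_invF fi v) mem_map // !(inj_eq fi).
Qed.

Section Symmetries.
Variables (m : nat) (sg : {perm 'I_m}) (p : {ffun 'I_m -> {perm 'I_3}}).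

Definition sym_inv := sym sg^-1 [ffun k => (p (sg^-1 k))^-1]%g.

Lemma symK : cancel (sym sg p) sym_inv.
Proof. by move=> v; apply/ffunP => k; rewrite !ffunE permKV permK. Qed.

Lemma sym_invK : cancel sym_inv (sym sg p).
Proof. by move=> v; apply/ffunP => k; rewrite !ffunE permK permKV. Qed.

Lemma sym_inj : injective (sym sg p). Proof. exact: can_inj symK. Qed.

Lemma is_edge_sym u v w : is_edge u v w -> is_edge (sym sg p u) (sym sg p v) (sym sg p w).
Proof.
case=> uv vw uw [i Hi]; split; rewrite ?(inj_eq sym_inj) //.
exists (sg^-1 i)%g => j ji; rewrite !ffunE.
have : sg j != i by apply: contra ji => /eqP <-; rewrite permK.
by case/Hi => -> ->.
Qed.

Lemma config_sym a b x y : config a b x y ->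
  config (sym sg p a) (sym sg p b) (sym sg p x) (sym sg p y).
Proof. by case=> [[? ? ?] [? ? ?]]; split; split; rewrite (inj_eq sym_inj). Qed.

End Symmetries.

Lemma covered_sym m (sg : {perm 'I_m}) p (a b x y : V m) : config a b x y ->
  covered (sym sg p a) (sym sg p b) (sym sg p x) (sym sg p y) -> covered a b x y.
Proof.
move=> C; have [[ab _ _] [_ _ xy]] := C; have [[gab _ _] [_ _ gxy]] := config_sym sg p C.
case/(coveredP gab gxy) => s /(@spans_map _ (sym_inv sg p)) Hs; apply/(coveredP ab xy).
exists (map (sym_inv sg p) s).
by rewrite -[a](symK sg p) -[b](symK sg p) -[x](symK sg p) -[y](symK sg p); apply: Hs;
  [apply: can_inj (sym_invK sg p) | apply: is_edge_sym].
Qed.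

Lemma config_swap m (a b x y : V m) : config a b x y -> config a b y x.
Proof. by case=> [[? ? ?] [? ? ?]]; split; split; rewrite // eq_sym. Qed.

Lemma config_rev m (a b x y : V m) : config a b x y -> config b a x y.
Proof. by case=> [[? ? ?] [? ? ?]]; split; split; rewrite // eq_sym. Qed.

Lemma covered_swap m (a b x y : V m) : covered a b x y -> covered a b y x.
Proof. by case=> s [H M]; exists s; split => // v; rewrite M andbC. Qed.

Lemma covered_rev m (a b x y : V m) : config a b x y -> covered a b x y -> covered b a x y.
Proof.
case=> [[ab _ _] [_ _ xy]] /(coveredP ab xy) [s /spans_rev Hs].
by apply/coveredP; [rewrite eq_sym | | exists (rev s)].
Qed.

Lemma covered_of_type m (P : V m -> V m -> V m -> V m -> Prop) :
  (forall a b x y, config a b x y -> P a b x y -> covered a b x y) ->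
  forall a b x y, config a b x y -> of_type P a b x y -> covered a b x y.
Proof.
move=> HP a b x y C [sg [p [H|H]]]; apply: (covered_sym (sg := sg) (p := p)) => //.
  exact: HP (config_sym _ _ C) H.
exact/covered_swap/HP/H/config_sym/config_swap.
Qed.

Section Layers.
Variable m : nat.
Implicit Types (u v w : V m) (c : 'I_3).

Definition lay c v : V m.+1 := [ffun i => if unlift ord_max i is Some j then v j else c].

Lemma widen_lift (i : 'I_m) : widen_ord (leqnSn m) i = lift ord_max i.
Proof. by apply/val_inj; rewrite /= /bump leqNgt ltn_ord. Qed.

Lemma lst_lay c v : lst (lay c v) = c.
Proof. by rewrite /lst ffunE unlift_none. Qed.

Lemma pre_lay c v : pre (lay c v) = v.
Proof. by apply/ffunP => i; rewrite !ffunE widen_lift liftK. Qed.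

Lemma lay_eta (w : V m.+1) : lay (lst w) (pre w) = w.
Proof.
by apply/ffunP => i; rewrite ffunE; case: unliftP => [j ->|->] //; rewrite ffunE widen_lift.
Qed.

Lemma lay_eqE c c' u u' : (lay c u == lay c' u') = (c == c') && (u == u').
Proof.
apply/eqP/andP => [E|[/eqP -> /eqP -> //]].
by split; apply/eqP; [rewrite -(lst_lay c u) E lst_lay | rewrite -(pre_lay c u) E pre_lay].
Qed.

Lemma lay_inj c : injective (lay c).
Proof. by move=> u u' /eqP; rewrite lay_eqE eqxx => /eqP. Qed.

Lemma mem_map_lay c c' w s : (lay c w \in map (lay c') s) = (c == c') && (w \in s).
Proof.
case: (c =P c') => [<-|ne]; first by rewrite mem_map //; apply: lay_inj.
by apply/mapP => [[z _ /eqP]]; rewrite lay_eqE => /andP [/eqP].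
Qed.

Lemma is_edge_lay c u v w : is_edge u v w -> is_edge (lay c u) (lay c v) (lay c w).
Proof.
case=> uv vw uw [i Hi]; split; rewrite ?lay_eqE ?eqxx //.
exists (lift ord_max i) => j.
case: (unliftP ord_max j) => [j' ->|->]; rewrite !ffunE ?unlift_none //.
by rewrite liftK (inj_eq (@lift_inj _ _)) => /Hi.
Qed.

Lemma is_edge_vert c1 c2 c3 v : uniq [:: c1; c2; c3] ->
  is_edge (lay c1 v) (lay c2 v) (lay c3 v).
Proof.
rewrite /= !inE !negb_or andbT => /andP [/andP [h1 h3] h2].
split; rewrite ?lay_eqE ?(negbTE h1) ?(negbTE h2) ?(negbTE h3) //.
by exists ord_max => j; case: (unliftP ord_max j) => [j' ->|->]; rewrite ?eqxx // !ffunE liftK.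
Qed.

Lemma card_V : #|V m| = 3 ^ m.
Proof. by rewrite card_ffun !card_ord. Qed.
End Layers.

Lemma mem_uniq_I3 (c c1 c2 c3 : 'I_3) : uniq [:: c1; c2; c3] -> c \in [:: c1; c2; c3].
Proof.
move=> u; have [_ ->] := uniq_min_size u (fun z _ => mem_enum _ z) (eq_leq (size_enum_ord 3)).
by rewrite mem_enum.
Qed.

Lemma uniq3 (T : eqType) (a b c : T) : uniq [:: a; b; c] = [&& a != b, a != c & b != c].
Proof. by rewrite /= !inE !negb_or andbT andbA. Qed.

Section Snake.
Variable m : nat.
Implicit Types (u w : V m) (c : 'I_3).

Definition vert u c1 c2 c3 : seq (V m.+1) := [:: lay c1 u; lay c2 u; lay c3 u].

Lemma lwalk_vert u c1 c2 c3 : uniq [:: c1; c2; c3] ->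
  lwalk (lay c1 u) (lay c3 u) (vert u c1 c2 c3).
Proof. by move=> cu; apply/lwalk_edge/is_edge_vert. Qed.

Lemma mem_vert u c1 c2 c3 c w : uniq [:: c1; c2; c3] ->
  (lay c w \in vert u c1 c2 c3) = (w == u).
Proof.
move=> /(mem_uniq_I3 c); rewrite !inE !lay_eqE.
by case/or3P => /eqP ->; rewrite eqxx ?andbT; case: (w == u); rewrite ?orbT ?andbF.
Qed.

Definition snake l1 l2 l3 P R (s1 s2 s3 : seq (V m)) :=
  glue (map (lay l1) s1) (glue (vert P l1 l3 l2)
    (glue (map (lay l2) s2) (glue (vert R l2 l1 l3) (map (lay l3) s3)))).

Variables (l1 l2 l3 : 'I_3) (A P R B : V m) (s1 s2 s3 : seq (V m)).
Hypotheses (walk1 : lwalk A P s1) (walk2 : lwalk P R s2) (walk3 : lwalk R B s3).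

Lemma size_snake : size (snake l1 l2 l3 P R s1 s2 s3) = size s1 + size s2 + size s3 + 2.
Proof.
have := size_lwalk walk2; have := size_lwalk walk3.
by rewrite !size_glue !size_map /=; lia.
Qed.

Hypothesis l_uniq : uniq [:: l1; l2; l3].

Let l132 : uniq [:: l1; l3; l2].
Proof.
by move: l_uniq; rewrite !uniq3 => /and3P [? ? ?]; apply/and3P; split; rewrite // eq_sym.
Qed.

Let l213 : uniq [:: l2; l1; l3].
Proof.
by move: l_uniq; rewrite !uniq3 => /and3P [? ? ?]; apply/and3P; split; rewrite // eq_sym.
Qed.

Let walk_lay l (a b : V m) s : lwalk a b s -> lwalk (lay l a) (lay l b) (map (lay l) s).
Proof. exact/lwalk_map/is_edge_lay. Qed.

Let walk_R := lwalk_glue (lwalk_vert R l213) (walk_lay l3 walk3).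
Let walk_l2 := lwalk_glue (walk_lay l2 walk2) walk_R.
Let walk_P := lwalk_glue (lwalk_vert P l132) walk_l2.

Lemma lwalk_snake : lwalk (lay l1 A) (lay l3 B) (snake l1 l2 l3 P R s1 s2 s3).
Proof. exact: lwalk_glue (walk_lay l1 walk1) walk_P. Qed.

Lemma mem_snake c w : (lay c w \in snake l1 l2 l3 P R s1 s2 s3) =
  [|| (c == l1) && (w \in s1), w == P, (c == l2) && (w \in s2), w == R | (c == l3) && (w \in s3)].
Proof.
rewrite (mem_glue _ (walk_lay l1 walk1) walk_P) (mem_glue _ (lwalk_vert P l132) walk_l2).
rewrite (mem_glue _ (walk_lay l2 walk2) walk_R).
rewrite (mem_glue _ (lwalk_vert R l213) (walk_lay l3 walk3)).
by rewrite !mem_map_lay !mem_vert.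
Qed.

End Snake.

Section Patterns.
Variables (I T : eqType) (cs : seq I).
Implicit Types (A B X Y u w : I -> T) (i j : I).

Definition differ u w := has (fun k => u k != w k) cs.
Definition differ_off j u w := has (fun k => (k != j) && (u k != w k)) cs.
Definition agree2 u w i i' := (u i == w i) && (u i' == w i').

(* Decidable shadows of the types phi1, ..., phi4, in which the coordinate [j]
   plays the role of the last one. *)
Definition phi1_at j A B X Y :=
  [&& A j == X j, uniq [:: A j; B j; Y j], differ_off j A B, differ_off j A X,
      differ_off j A Y & has (fun i => (i != j) && (B i \in [:: A i; X i; Y i])) cs].

Definition phi2_at j A B X Y :=
  [&& A j == B j, uniq [:: A j; X j; Y j],
      [&& differ_off j A B, differ_off j A X & differ_off j A Y] ||
      [&& differ_off j B A, differ_off j B X & differ_off j B Y] &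
      has (fun i => has (fun i' => [&& i != j, i' != j, i != i' &
        [|| agree2 A X i i', agree2 A Y i i', agree2 B X i i' | agree2 B Y i i']]) cs) cs].

Definition phi3_at j A B X Y :=
  [&& A j == X j, B j == Y j, A j != B j &
      has (fun i => (i != j) && ((A i == Y i) || (B i == X i))) cs].

Definition phi4_at j A B X Y := phi1_at j B A X Y.

Definition coord_pred := I -> (I -> T) -> (I -> T) -> (I -> T) -> (I -> T) -> bool.

Definition some_coord (pat : coord_pred) A B X Y :=
  has (fun j => pat j A B X Y || pat j A B Y X) cs.

Definition phi_conf A B X Y :=
  [&& differ A B, differ A X, differ A Y, differ B X, differ B Y & differ X Y] &&
  [|| some_coord phi1_at A B X Y, some_coord phi2_at A B X Y,
      some_coord phi3_at A B X Y | some_coord phi4_at A B X Y].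
End Patterns.

Lemma I3_cases (z : 'I_3) : [\/ z = c0, z = c1 | z = c2].
Proof.
by case: z => [[|[|[|?]]] ?] //; [constructor 1 | constructor 2 | constructor 3]; apply/val_inj.
Qed.

Section Perm01.
Variables u v : 'I_3.

Definition perm01_fun (z : 'I_3) : 'I_3 :=
  if u == v then z else if z == u then c0 else if z == v then c1 else c2.

Lemma perm01_fun_inj : injective perm01_fun.
Proof.
move=> z1 z2; rewrite /perm01_fun.
by case: (I3_cases u) => ->; case: (I3_cases v) => ->; case: (I3_cases z1) => ->;
  case: (I3_cases z2) => ->.
Qed.

Definition perm01 : {perm 'I_3} := perm perm01_fun_inj.

Hypothesis uv : u != v.

Lemma perm01_l : perm01 u = c0.
Proof. by rewrite permE /perm01_fun (negbTE uv) eqxx. Qed.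

Lemma perm01_r : perm01 v = c1.
Proof. by rewrite permE /perm01_fun (negbTE uv) eq_sym (negbTE uv) eqxx. Qed.

Lemma perm01_other z : z != u -> z != v -> perm01 z = c2.
Proof. by rewrite permE /perm01_fun (negbTE uv) => /negbTE -> /negbTE ->. Qed.
End Perm01.

Section ToLast.
Variables (n : nat) (j : 'I_n.+1) (pi : {perm 'I_3}).

Definition to_last := sym (tperm j ord_max) [ffun i => if i == ord_max then pi else 1%g].

Lemma lst_to_last (v : V n.+1) : lst (to_last v) = pi (v j).
Proof. by rewrite /lst !ffunE eqxx tpermR. Qed.

Lemma widen_neq_max (i : 'I_n) : widen_ord (leqnSn n) i != ord_max.
Proof. by rewrite -val_eqE /= neq_ltn ltn_ord. Qed.

Lemma co_to_last (v : V n.+1) i : co (to_last v) i = v (tperm j ord_max (widen_ord (leqnSn n) i)).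
Proof. by rewrite /co !ffunE (negbTE (widen_neq_max i)) perm1. Qed.

Lemma pre_to_last (v : V n.+1) i : pre (to_last v) i = v (tperm j ord_max (widen_ord (leqnSn n) i)).
Proof. by rewrite [LHS]ffunE; apply: co_to_last. Qed.

Lemma to_last_coord k : k != j -> exists i : 'I_n, tperm j ord_max (widen_ord (leqnSn n) i) = k.
Proof.
move=> kj; have km : tperm j ord_max k != ord_max.
  by apply: contra kj => /eqP E; rewrite -(tpermK j ord_max k) E tpermR.
have lt_k : val (tperm j ord_max k) < n.
  by move: km (ltn_ord (tperm j ord_max k)); rewrite -val_eqE /= ltnS leq_eqVlt => /negbTE ->.
exists (Ordinal lt_k).
by rewrite (_ : widen_ord _ _ = tperm j ord_max k) ?tpermK //; apply: val_inj.
Qed.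

Lemma pre_to_last_neq (u w : V n.+1) :
  differ_off (enum 'I_n.+1) j u w -> pre (to_last u) != pre (to_last w).
Proof.
case/hasP=> k _ /andP [/to_last_coord [i <-]].
apply: contra => /eqP E; have := congr1 (fun f : V n => f i) E.
by rewrite /= !pre_to_last => ->.
Qed.

Lemma has_to_last (Pr : 'I_3 -> 'I_3 -> 'I_3 -> 'I_3 -> bool) (A B X Y : V n.+1) :
  has (fun k => (k != j) && Pr (A k) (B k) (X k) (Y k)) (enum 'I_n.+1) ->
  exists i : 'I_n, Pr (co (to_last A) i) (co (to_last B) i) (co (to_last X) i) (co (to_last Y) i).
Proof. by case/hasP=> k _ /andP [/to_last_coord [i Ei] H]; exists i; rewrite !co_to_last Ei. Qed.
End ToLast.

Section Realization.
Variable n : nat.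
Notation cs := (enum 'I_n.+1).
Implicit Types (A B X Y : V n.+1) (j : 'I_n.+1).

Lemma phi1_at_to_last j A B X Y : phi1_at cs j A B X Y ->
  let g := to_last j (perm01 (A j) (B j)) in phi1 (g A) (g B) (g X) (g Y).
Proof.
case/and5P=> /eqP ax; rewrite uniq3 => /and3P [ab aY bY] dB dX /andP [dY Hi] /=; split.
  split; rewrite ?lst_to_last -?ax ?perm01_l ?perm01_r ?perm01_other // 1?eq_sym //.
  by rewrite !inE !negb_or !pre_to_last_neq.
have [i ?] := has_to_last (perm01 (A j) (B j)) (Pr := fun a b x y => b \in [:: a; x; y]) Hi.
by exists i.
Qed.

Lemma phi4_at_to_last j A B X Y : phi4_at cs j A B X Y ->
  let g := to_last j (perm01 (A j) (B j)) in phi4 (g A) (g B) (g X) (g Y).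
Proof.
case/and5P=> /eqP bx; rewrite uniq3 => /and3P [ba bY aY] dA dX /andP [dY Hi] /=; split.
  split; rewrite ?lst_to_last -?bx ?perm01_l ?perm01_r ?perm01_other // 1?eq_sym //.
  by rewrite !inE !negb_or !pre_to_last_neq.
have [i ?] := has_to_last (perm01 (A j) (B j)) (Pr := fun a b x y => a \in [:: b; x; y]) Hi.
by exists i.
Qed.

Lemma phi3_at_to_last j A B X Y : phi3_at cs j A B X Y ->
  let g := to_last j (perm01 (A j) (B j)) in phi3 (g A) (g B) (g X) (g Y).
Proof.
case/and4P=> /eqP ax /eqP bY ab Hi /=; split.
  by split; rewrite lst_to_last -?ax -?bY ?perm01_l ?perm01_r.
have [i /orP Hi'] :=
  has_to_last (perm01 (A j) (B j)) (Pr := fun a b x y => (a == y) || (b == x)) Hi.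
by exists i; case: Hi' => /eqP; [left | right].
Qed.

Lemma phi2_at_to_last j A B X Y : phi2_at cs j A B X Y ->
  let g := to_last j (perm01 (A j) (X j)) in phi2 (g A) (g B) (g X) (g Y).
Proof.
case/and4P=> /eqP ab; rewrite uniq3 => /and3P [ax aY xY] Hd Hi /=.
set g := to_last _ _; split.
  have [la lb lx ly] : [/\ lst (g A) = c0, lst (g B) = c0, lst (g X) = c1 & lst (g Y) = c2].
    by rewrite !lst_to_last -ab perm01_l // perm01_r // perm01_other // eq_sym.
  by case/orP: Hd => /and3P [d1 d2 d3]; [left | right]; split;
    rewrite // !inE !negb_or !pre_to_last_neq.
case/hasP: Hi => k _ /hasP [k' _] /and4P [/to_last_coord [i Ei] /to_last_coord [i' Ei'] kk' Hagr].
have ii' : i != i' by apply: contra kk' => /eqP E; rewrite -Ei -Ei' E.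
have co_g v i0 k0 : tperm j ord_max (widen_ord (leqnSn n) i0) = k0 -> co (g v) i0 = v k0.
  by move=> E; rewrite co_to_last E.
exists i, i'.
by case/or4P: Hagr => /andP [/eqP E1 /eqP E2];
  [exists (g A), (g X) | exists (g A), (g Y) | exists (g B), (g X) | exists (g B), (g Y)];
  split; rewrite ?inE ?eqxx ?orbT ?(co_g _ _ _ Ei) ?(co_g _ _ _ Ei').
Qed.

Lemma of_type_some_coord (P : V n.+1 -> V n.+1 -> V n.+1 -> V n.+1 -> Prop)
    (pat : coord_pred 'I_n.+1 'I_3) :
  (forall j A B X Y, pat j A B X Y ->
     exists pi, let g := to_last j pi in P (g A) (g B) (g X) (g Y)) ->
  forall A B X Y, some_coord cs pat A B X Y -> of_type P A B X Y.
Proof.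
move=> HP A B X Y /hasP [j _ /orP [] /HP [pi H]];
  exists (tperm j ord_max), [ffun i => if i == ord_max then pi else 1%g]; [left | right]; exact: H.
Qed.

Lemma differ_neq (u w : V n.+1) : differ cs u w -> u != w.
Proof. by case/hasP=> k _; apply: contra => /eqP ->. Qed.

Lemma phi_conf_config A B X Y : phi_conf cs A B X Y -> config A B X Y.
Proof. by case/andP=> /and5P [? ? ? ? /andP [? ?]] _; do 2 split; apply: differ_neq. Qed.

Lemma phi_conf_type A B X Y : phi_conf cs A B X Y ->
  config A B X Y /\ (of_type (@phi1 n) A B X Y \/ of_type (@phi2 n) A B X Y \/
                     of_type (@phi3 n) A B X Y \/ of_type (@phi4 n) A B X Y).
Proof.
move=> H; split; first exact: phi_conf_config.
case/andP: H => _ /or4P [] H; [left | right; left | right; right; left | right; right; right].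
- by apply: (of_type_some_coord (pat := phi1_at cs)) H => j A' B' ? ? /phi1_at_to_last H;
    exists (perm01 (A' j) (B' j)).
- by apply: (of_type_some_coord (pat := phi2_at cs)) H => j A' ? X' ? /phi2_at_to_last H;
    exists (perm01 (A' j) (X' j)).
- by apply: (of_type_some_coord (pat := phi3_at cs)) H => j A' B' ? ? /phi3_at_to_last H;
    exists (perm01 (A' j) (B' j)).
- by apply: (of_type_some_coord (pat := phi4_at cs)) H => j A' B' ? ? /phi4_at_to_last H;
    exists (perm01 (A' j) (B' j)).
Qed.
End Realization.

Section Transfer.
Variables (I I' T T' : eqType) (cs : seq I) (cs' : seq I') (h : I -> I') (F : I -> T' -> T).
Hypotheses (h_in : forall k, k \in cs -> h k \in cs') (h_inj : {in cs &, injective h})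
  (F_inj : forall k, injective (F k)).

Definition pattern_of (u' : I -> T) (u : I' -> T') := forall k, k \in cs -> u' k = F k (u (h k)).

Lemma has_transfer (P : pred I) (P' : pred I') :
  (forall k, k \in cs -> P k -> P' (h k)) -> has P cs -> has P' cs'.
Proof. by move=> H /hasP [k kc Pk]; apply/hasP; exists (h k); [apply: h_in | apply: H]. Qed.

Lemma has_off_transfer j (q : pred I) (q' : pred I') : j \in cs ->
  (forall k, k \in cs -> q k -> q' (h k)) ->
  has (fun k => (k != j) && q k) cs -> has (fun k => (k != h j) && q' k) cs'.
Proof.
move=> jc H; apply: has_transfer => k kc /andP [kj /(H k kc) ->].
by rewrite (inj_in_eq h_inj) ?kj.
Qed.

Lemma differ_transfer u' u w' w : pattern_of u' u -> pattern_of w' w ->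
  differ cs u' w' -> differ cs' u w.
Proof.
by move=> Ru Rw; apply: has_transfer => k kc; rewrite (Ru k kc) (Rw k kc) (inj_eq (@F_inj k)).
Qed.

Lemma differ_off_transfer j u' u w' w : j \in cs -> pattern_of u' u -> pattern_of w' w ->
  differ_off cs j u' w' -> differ_off cs' (h j) u w.
Proof.
move=> jc Ru Rw; apply: has_off_transfer => // k kc.
by rewrite (Ru k kc) (Rw k kc) (inj_eq (@F_inj k)).
Qed.

Section FourVectors.
Variables (A' B' X' Y' : I -> T) (A B X Y : I' -> T').
Hypotheses (RA : pattern_of A' A) (RB : pattern_of B' B)
  (RX : pattern_of X' X) (RY : pattern_of Y' Y).

Let eqs_at k (kc : k \in cs) := (RA kc, RB kc, RX kc, RY kc, inj_eq (@F_inj k)).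

Lemma phi1_at_transfer j : j \in cs -> phi1_at cs j A' B' X' Y' -> phi1_at cs' (h j) A B X Y.
Proof.
move=> jc; rewrite /phi1_at !uniq3 !(eqs_at jc).
case/and5P=> -> -> /(differ_off_transfer jc RA RB) -> /(differ_off_transfer jc RA RX) ->.
case/andP=> /(differ_off_transfer jc RA RY) ->; apply: has_off_transfer => // k kc.
by rewrite !inE !(eqs_at kc).
Qed.

Lemma phi2_at_transfer j : j \in cs -> phi2_at cs j A' B' X' Y' -> phi2_at cs' (h j) A B X Y.
Proof.
move=> jc; rewrite /phi2_at !uniq3 !(eqs_at jc).
case/and4P=> -> -> Hd Hi /=; apply/andP; split.
  case/orP: Hd => /and3P [d1 d2 d3]; apply/orP; [left | right].
    by rewrite (differ_off_transfer jc RA RB d1) (differ_off_transfer jc RA RX d2)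
      (differ_off_transfer jc RA RY d3).
  by rewrite (differ_off_transfer jc RB RA d1) (differ_off_transfer jc RB RX d2)
    (differ_off_transfer jc RB RY d3).
move: Hi; apply: has_transfer => k kc; apply: has_transfer => k' k'c.
by rewrite /agree2 !(eqs_at kc) !(eqs_at k'c) !(inj_in_eq h_inj).
Qed.

Lemma phi3_at_transfer j : j \in cs -> phi3_at cs j A' B' X' Y' -> phi3_at cs' (h j) A B X Y.
Proof.
move=> jc; rewrite /phi3_at !(eqs_at jc) => /and4P [-> -> ->].
by apply: has_off_transfer => // k kc; rewrite !(eqs_at kc).
Qed.
End FourVectors.

Lemma phi4_at_transfer A' B' X' Y' A B X Y : pattern_of A' A -> pattern_of B' B ->
  pattern_of X' X -> pattern_of Y' Y ->
  forall j, j \in cs -> phi4_at cs j A' B' X' Y' -> phi4_at cs' (h j) A B X Y.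
Proof. by move=> RA RB RX RY; apply: phi1_at_transfer. Qed.

Lemma some_coord_transfer (pat : coord_pred I T) (pat' : coord_pred I' T') :
  (forall A' B' X' Y' A B X Y, pattern_of A' A -> pattern_of B' B ->
     pattern_of X' X -> pattern_of Y' Y ->
     forall j, j \in cs -> pat j A' B' X' Y' -> pat' (h j) A B X Y) ->
  forall A' B' X' Y' A B X Y, pattern_of A' A -> pattern_of B' B ->
    pattern_of X' X -> pattern_of Y' Y ->
  some_coord cs pat A' B' X' Y' -> some_coord cs' pat' A B X Y.
Proof.
move=> Hpat A' B' X' Y' A B X Y RA RB RX RY; apply: has_transfer => j jc.
by case/orP=> /Hpat H; apply/orP; [left; apply: H | right; apply: H].
Qed.

Lemma phi_conf_transfer A' B' X' Y' A B X Y : pattern_of A' A -> pattern_of B' B ->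
  pattern_of X' X -> pattern_of Y' Y -> phi_conf cs A' B' X' Y' -> phi_conf cs' A B X Y.
Proof.
move=> RA RB RX RY /andP [/and5P [dAB dAX dAY dBX /andP [dBY dXY]] H]; apply/andP; split.
  by rewrite (differ_transfer RA RB dAB) (differ_transfer RA RX dAX) (differ_transfer RA RY dAY)
    (differ_transfer RB RX dBX) (differ_transfer RB RY dBY) (differ_transfer RX RY dXY).
case/or4P: H => H; apply/or4P; [constructor 1 | constructor 2 | constructor 3 | constructor 4];
  move: H; apply: some_coord_transfer => //.
- exact: phi1_at_transfer.
- exact: phi2_at_transfer.
- exact: phi3_at_transfer.
- exact: phi4_at_transfer.
Qed.
End Transfer.

Section Splittings.
Variables (I T : eqType) (cs : seq I).
Implicit Types A B X Y P Q R S : I -> T.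

Definition t1_split A B X Y P Q :=
  [&& phi_conf cs A P Y Q, phi_conf cs P Q A X & phi_conf cs Q B A P].
Definition t2_split A B X Y P R :=
  [&& phi_conf cs A P Y R, phi_conf cs P R X A & phi_conf cs R B A P].
Definition t3_split A B X Y P R V S :=
  [&& phi_conf cs A P X R, phi_conf cs R B Y P & phi_conf cs P V S R].
End Splittings.

Definition coord3 (T : Type) (x0 x1 x2 : T) (k : nat) : T :=
  if k is k'.+1 then (if k' is 0 then x1 else x2) else x0.

Definition ords3 := [:: 0; 1; 2].

Definition col := (nat * nat * nat * nat)%type.

(* The restricted growth strings of length 4 over {0,1,2}: up to a renaming of
   values, every column (a_i, b_i, x_i, y_i) of a configuration is one of them. *)
Definition canon_cols : seq col :=
  [:: (0,0,0,0); (0,0,0,1); (0,0,1,0); (0,0,1,1); (0,0,1,2); (0,1,0,0); (0,1,0,1);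
      (0,1,0,2); (0,1,1,0); (0,1,1,1); (0,1,1,2); (0,1,2,0); (0,1,2,1); (0,1,2,2)].

Definition vec3 (f : col -> nat) (c0 c1 c2 : col) : nat -> nat := coord3 (f c0) (f c1) (f c2).

Definition on_canon_cols
    (F : (nat -> nat) -> (nat -> nat) -> (nat -> nat) -> (nat -> nat) -> bool) :=
  all (fun c0 => all (fun c1 => all (fun c2 =>
    F (vec3 (fun c => c.1.1.1) c0 c1 c2) (vec3 (fun c => c.1.1.2) c0 c1 c2)
      (vec3 (fun c => c.1.2) c0 c1 c2) (vec3 (fun c => c.2) c0 c1 c2))
    canon_cols) canon_cols) canon_cols.

Definition cands12 : seq ((nat -> nat) * (nat -> nat)) :=
  [:: (coord3 1 2 2, coord3 2 0 2); (coord3 2 0 1, coord3 2 2 0);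
      (coord3 1 2 0, coord3 0 2 2); (coord3 0 1 0, coord3 1 0 0)].

Definition cands3 : seq ((nat -> nat) * (nat -> nat) * (nat -> nat) * (nat -> nat)) :=
  [:: (coord3 1 2 2, coord3 0 2 2, coord3 0 1 2, coord3 0 0 2);
      (coord3 2 1 2, coord3 2 0 2, coord3 1 0 2, coord3 0 0 2);
      (coord3 0 2 0, coord3 0 2 1, coord3 2 2 1, coord3 1 2 1)].

Lemma t1_table : on_canon_cols (fun A B X Y =>
  [&& differ ords3 A B, differ ords3 A X & differ ords3 A Y] ==>
  has (fun PQ => t1_split ords3 A B X Y PQ.1 PQ.2) cands12).
Proof. by vm_compute. Qed.

Lemma t2_table : on_canon_cols (fun A B X Y =>
  [&& differ ords3 A B, differ ords3 A X & differ ords3 A Y] ==>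
  has (fun PR => t2_split ords3 A B X Y PR.1 PR.2) cands12).
Proof. by vm_compute. Qed.

Lemma t3_table : on_canon_cols (fun A B X Y =>
  differ ords3 A X && differ ords3 B Y ==>
  has (fun c => t3_split ords3 A B X Y c.1.1.1 c.1.1.2 c.1.2 c.2) cands3).
Proof. by vm_compute. Qed.

Lemma has_all_witness (T : Type) (p q : pred T) s : has p s -> all q s -> exists2 x, p x & q x.
Proof.
elim: s => //= x s IH /orP [px /andP [qx _] | /IH H /andP [_ /H //]].
by exists x.
Qed.

Definition canon_perm (a b x y : 'I_3) : {perm 'I_3} :=
  perm01 a (if b != a then b else if x != a then x else if y != a then y
            else if a != c0 then c0 else c1).

Lemma canon_perm_col a b x y : let p := canon_perm a b x y in
  (val (p a), val (p b), val (p x), val (p y)) \in canon_cols.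
Proof.
rewrite /canon_perm /= !permE.
by case: (I3_cases a) => ->; case: (I3_cases b) => ->; case: (I3_cases x) => ->;
  case: (I3_cases y) => ->.
Qed.

Lemma mem_ords3 k : (k \in ords3) = (k < 3).
Proof. by case: k => [|[|[|k]]]. Qed.

Definition small (w : nat -> nat) := all (fun k => w k < 3) ords3.

Lemma cands12_small : all (fun PQ => small PQ.1 && small PQ.2) cands12.
Proof. by []. Qed.

Definition line3 (V S R : nat -> nat) := has (fun c => uniq [:: V c; S c; R c] &&
  all (fun k => (k != c) ==> (V k == R k) && (S k == R k)) ords3) ords3.

Lemma cands3_small_line : all (fun c =>
  [&& small c.1.1.1, small c.1.1.2, small c.1.2, small c.2 & line3 c.1.2 c.2 c.1.1.2]) cands3.
Proof. by []. Qed.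

Section TableInstance.
Variables (n : nat) (gs : seq 'I_n.+1) (A B X Y : V n.+1).
Hypotheses (gs_uniq : uniq gs) (gs_size : size gs = 3).

Let coord k := nth ord0 gs k.
Let canon k := canon_perm (A (coord k)) (B (coord k)) (X (coord k)) (Y (coord k)).
Let relabel k z := val (canon k z).
Let col_at k : col :=
  (relabel k (A (coord k)), relabel k (B (coord k)), relabel k (X (coord k)),
   relabel k (Y (coord k))).
Let col_vec f := vec3 f (col_at 0) (col_at 1) (col_at 2).

Definition extend (w : nat -> nat) : V n.+1 :=
  [ffun i => if index i gs < 3 then (canon (index i gs))^-1%g (inord (w (index i gs))) else c0].

Let pat_of := pattern_of ords3 coord relabel.

Let coord_in k : k \in ords3 -> coord k \in enum 'I_n.+1.
Proof. by rewrite mem_enum. Qed.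

Let coord_inj : {in ords3 &, injective coord}.
Proof.
move=> k k' kc k'c E; apply/eqP.
by rewrite -(nth_uniq ord0 _ _ gs_uniq) ?gs_size -?mem_ords3 //; apply/eqP.
Qed.

Let relabel_inj k : injective (relabel k).
Proof. by move=> z z' /val_inj /perm_inj. Qed.

Let pattern_of_col f u :
  (forall k, f (col_at k) = relabel k (u (coord k))) -> pat_of (col_vec f) u.
Proof. by move=> Hf k; rewrite !inE => /or3P [] /eqP ->; apply: Hf. Qed.

Let pattern_of_extend w : small w -> pat_of w (extend w).
Proof.
move=> /allP wsmall k kc; have k3 : k < 3 by rewrite -mem_ords3.
by rewrite /relabel ffunE index_uniq ?gs_size // k3 permKV /= inordK //; apply: wsmall.
Qed.

Let phi_conf_lift u1' u2' u3' u4' u1 u2 u3 u4 : pat_of u1' u1 -> pat_of u2' u2 ->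
  pat_of u3' u3 -> pat_of u4' u4 -> phi_conf ords3 u1' u2' u3' u4' ->
  phi_conf (enum 'I_n.+1) u1 u2 u3 u4.
Proof. exact: (phi_conf_transfer coord_in coord_inj relabel_inj). Qed.

Let pA := col_vec (fun c => c.1.1.1).
Let pB := col_vec (fun c => c.1.1.2).
Let pX := col_vec (fun c => c.1.2).
Let pY := col_vec (fun c => c.2).
Let RA : pat_of pA A. Proof. exact: pattern_of_col. Qed.
Let RB : pat_of pB B. Proof. exact: pattern_of_col. Qed.
Let RX : pat_of pX X. Proof. exact: pattern_of_col. Qed.
Let RY : pat_of pY Y. Proof. exact: pattern_of_col. Qed.

Let differ_of_coord u' u w' w : pat_of u' u -> pat_of w' w ->
  (exists2 k, k \in gs & u k != w k) -> differ ords3 u' w'.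
Proof.
move=> Ru Rw [k kg]; have kc : index k gs \in ords3 by rewrite mem_ords3 -gs_size index_mem.
apply: contraLR => /hasPn /(_ _ kc).
by rewrite Ru // Rw // (inj_eq (relabel_inj (k := _))) /coord nth_index.
Qed.

Let table_instance F : on_canon_cols F -> F pA pB pX pY.
Proof.
have col_canon k : col_at k \in canon_cols by apply: canon_perm_col.
by move=> /allP /(_ _ (col_canon 0)) /allP /(_ _ (col_canon 1)) /allP /(_ _ (col_canon 2)).
Qed.

Lemma t1_split_extend : (exists2 k, k \in gs & A k != B k) ->
  (exists2 k, k \in gs & A k != X k) -> (exists2 k, k \in gs & A k != Y k) ->
  exists P Q : V n.+1, t1_split (enum 'I_n.+1) A B X Y P Q.
Proof.
move=> sepB sepX sepY; have := table_instance t1_table.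
rewrite (differ_of_coord RA RB sepB) (differ_of_coord RA RX sepX) (differ_of_coord RA RY sepY).
move/has_all_witness/(_ cands12_small) => -[[P' Q'] /and3P [h1 h2 h3]].
case/andP=> /pattern_of_extend RP /pattern_of_extend RQ; exists (extend P'), (extend Q').
by apply/and3P; split;
  [apply: phi_conf_lift h1 | apply: phi_conf_lift h2 | apply: phi_conf_lift h3].
Qed.

Lemma t2_split_extend : (exists2 k, k \in gs & A k != B k) ->
  (exists2 k, k \in gs & A k != X k) -> (exists2 k, k \in gs & A k != Y k) ->
  exists P R : V n.+1, t2_split (enum 'I_n.+1) A B X Y P R.
Proof.
move=> sepB sepX sepY; have := table_instance t2_table.
rewrite (differ_of_coord RA RB sepB) (differ_of_coord RA RX sepX) (differ_of_coord RA RY sepY).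
move/has_all_witness/(_ cands12_small) => -[[P' R'] /and3P [h1 h2 h3]].
case/andP=> /pattern_of_extend RP /pattern_of_extend RR; exists (extend P'), (extend R').
by apply/and3P; split;
  [apply: phi_conf_lift h1 | apply: phi_conf_lift h2 | apply: phi_conf_lift h3].
Qed.

Let is_edge_extend V' S' R' : small V' -> small S' -> small R' -> line3 V' S' R' ->
  is_edge (extend V') (extend S') (extend R').
Proof.
move=> /pattern_of_extend RV /pattern_of_extend RS /pattern_of_extend RR.
case/hasP=> c cc /andP []; rewrite uniq3 => /and3P [dVS dVR dSR] /allP agree.
have neq u' w' (u w : V n.+1) : pat_of u' u -> pat_of w' w -> u' c != w' c -> u != w.
  by move=> Ru Rw; apply: contra => /eqP E; rewrite Ru // Rw // E.
have eq_off w w' (E : forall k, k \in ords3 -> k != c -> w k = w' k) j :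
    j != coord c -> extend w j = extend w' j.
  move=> jc; rewrite !ffunE; case: ifP => // j3; rewrite E ?mem_ords3 //.
  by apply: contra jc => /eqP <-; rewrite /coord nth_index // -index_mem gs_size.
split; [exact: neq dVS | exact: neq dSR | exact: neq dVR | exists (coord c) => j jc].
by split; apply: eq_off => // k kc kc'; have /andP [/eqP E1 /eqP E2] := implyP (agree k kc) kc';
  rewrite ?E1 ?E2.
Qed.

Lemma t3_split_extend : (exists2 k, k \in gs & A k != X k) -> (exists2 k, k \in gs & B k != Y k) ->
  exists P R V' S : V n.+1, t3_split (enum 'I_n.+1) A B X Y P R V' S /\ is_edge V' S R.
Proof.
move=> sepX sepY; have := table_instance t3_table.
rewrite (differ_of_coord RA RX sepX) (differ_of_coord RB RY sepY).
move/has_all_witness/(_ cands3_small_line) => -[[[[P' R'] V'] S'] /and3P [h1 h2 h3]].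
case/and5P=> sP sR sV sS line; have RP := pattern_of_extend sP; have RR := pattern_of_extend sR.
have RV := pattern_of_extend sV; have RS := pattern_of_extend sS.
exists (extend P'), (extend R'), (extend V'), (extend S'); split; last exact: is_edge_extend.
by apply/and3P; split;
  [apply: phi_conf_lift h1 | apply: phi_conf_lift h2 | apply: phi_conf_lift h3].
Qed.
End TableInstance.

Lemma cover_by_3 (T : finType) (k1 k2 k3 : T) : 2 < #|T| ->
  exists2 gs : seq T, uniq gs /\ size gs = 3 & {subset [:: k1; k2; k3] <= gs}.
Proof.
move=> T3; set S := [set k in [:: k1; k2; k3]].
have S3 : #|S| <= 3 by rewrite cardsE card_size.
have /card_geqP [s [us ss sub]] : 3 - #|S| <= #|~: S| by have := cardsC S; lia.
exists (enum S ++ s); last by move=> k kin; rewrite mem_cat mem_enum inE kin.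
split; last by rewrite size_cat -cardE ss; lia.
rewrite cat_uniq enum_uniq us andbT /=; apply/hasPn => k /sub.
by rewrite inE mem_enum.
Qed.

Lemma ffun_neq_coord m (u w : V m) : u != w -> exists k, u k != w k.
Proof.
move=> uw; apply/existsP; apply: contraR uw; rewrite negb_exists => /forallP E.
by apply/eqP/ffunP => k; apply/eqP; have := E k; rewrite negbK.
Qed.

Section SplitExistence.
Variables (n : nat) (A B X Y : V n.+1).
Hypothesis n_gt1 : 2 < n.+1.

Let coords (u1 w1 u2 w2 u3 w3 : V n.+1) : u1 != w1 -> u2 != w2 -> u3 != w3 ->
  exists2 gs : seq 'I_n.+1, uniq gs /\ size gs = 3 &
    [/\ exists2 k, k \in gs & u1 k != w1 k, exists2 k, k \in gs & u2 k != w2 k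
      & exists2 k, k \in gs & u3 k != w3 k].
Proof.
move=> /ffun_neq_coord [k1 h1] /ffun_neq_coord [k2 h2] /ffun_neq_coord [k3 h3].
have [gs gs3 sub] : exists2 gs, uniq gs /\ size gs = 3 & {subset [:: k1; k2; k3] <= gs}.
  by apply: cover_by_3; rewrite card_ord.
exists gs => //; split; [exists k1 | exists k2 | exists k3] => //.
all: by apply: sub; rewrite !inE eqxx ?orbT.
Qed.

Lemma t1_split_exists : A != B -> A != X -> A != Y ->
  exists P Q : V n.+1, t1_split (enum 'I_n.+1) A B X Y P Q.
Proof.
move=> ab ax ay; have [gs [gu gs3] [sB sX sY]] := coords ab ax ay.
exact: t1_split_extend sB sX sY.
Qed.

Lemma t2_split_exists : A != B -> A != X -> A != Y ->
  exists P R : V n.+1, t2_split (enum 'I_n.+1) A B X Y P R.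
Proof.
move=> ab ax ay; have [gs [gu gs3] [sB sX sY]] := coords ab ax ay.
exact: t2_split_extend sB sX sY.
Qed.

Lemma t3_split_exists : A != X -> B != Y ->
  exists P R V' S : V n.+1, t3_split (enum 'I_n.+1) A B X Y P R V' S /\ is_edge V' S R.
Proof.
move=> ax b_y; have [gs [gu gs3] [sX sY _]] := coords ax b_y ax.
exact: t3_split_extend sX sY.
Qed.
End SplitExistence.

Lemma card_V_gt1 m : 1 < #|V m.+1|.
Proof. by rewrite card_V expnS; have := expn_gt0 3 m; lia. Qed.

Section Step.
Variable n : nat.
Hypothesis n_gt1 : 2 < n.+1.
Hypothesis phi_covered : forall a b x y : V n.+1, config a b x y ->
  of_type (@phi1 n) a b x y \/ of_type (@phi2 n) a b x y \/
  of_type (@phi3 n) a b x y \/ of_type (@phi4 n) a b x y -> covered a b x y.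

Let spans_of_phi_conf (A B X Y : V n.+1) :
  phi_conf (enum 'I_n.+1) A B X Y -> exists s, spans A B X Y s.
Proof.
move=> H; have [C T] := phi_conf_type H; have [[ab _ _] [_ _ xy]] := C.
exact/(coveredP ab xy)/phi_covered.
Qed.

Let size_layers k1 k2 k3 : k1 <= #|V n.+1| - 2 -> k2 <= #|V n.+1| - 2 ->
  k3 <= #|V n.+1| - 2 -> k1 + k2 + k3 + 4 <= #|V n.+2| - 2.
Proof. by rewrite [#|V n.+2|]card_V expnS -card_V; have := card_V_gt1 n; lia. Qed.

Lemma covered_t1 (a b x y : V n.+2) : t1 a b x y -> covered a b x y.
Proof.
case=> la lx lb ly; rewrite !inE !negb_or => /and3P [ab ax ay].
rewrite -(lay_eta a) -(lay_eta b) -(lay_eta x) -(lay_eta y) la lx lb ly.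
move: (pre a) (pre b) (pre x) (pre y) ab ax ay => A B X Y ab ax ay {la lx lb ly a b x y}.
have [P [Q /and3P [h2 h0 h1]]] := t1_split_exists n_gt1 ab ax ay.
have [s2 [w2 sz2 cov2]] := spans_of_phi_conf h2.
have [s0 [w0 sz0 cov0]] := spans_of_phi_conf h0.
have [s1 [w1 sz1 cov1]] := spans_of_phi_conf h1.
have lu : uniq [:: c2; c0; c1] by [].
have W := lwalk_snake w2 w0 w1 lu.
have WA := lwalk_vert A (isT : uniq [:: c0; c1; c2]).
apply/coveredP; rewrite ?lay_eqE //; exists (glue (vert A c0 c1 c2) (snake c2 c0 c1 P Q s2 s0 s1)).
split; first exact: lwalk_glue WA W.
  by rewrite size_glue (size_snake _ _ _ s2 w0 w1) /=; have := size_layers sz2 sz0 sz1; lia.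
move=> v; rewrite -(lay_eta v) !lay_eqE (mem_glue _ WA W) mem_vert // (mem_snake w2 w0 w1 lu) //.
case: (I3_cases (lst v)) => ->;
  [move: (cov0 (pre v)) | move: (cov1 (pre v)) | move: (cov2 (pre v))];
  by case/or3P=> [->|/eqP->|/eqP->]; rewrite ?eqxx ?orbT.
Qed.

Lemma covered_t2 (a b x y : V n.+2) : t2 a b x y -> covered a b x y.
Proof.
case=> la lb lx ly; rewrite !inE !negb_or => /and3P [ab ax ay].
rewrite -(lay_eta a) -(lay_eta b) -(lay_eta x) -(lay_eta y) la lx lb ly.
move: (pre a) (pre b) (pre x) (pre y) ab ax ay => A B X Y ab ax ay {la lx lb ly a b x y}.
have [P [R /and3P [h2 h1 h0]]] := t2_split_exists n_gt1 ab ax ay.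
have [s2 [w2 sz2 cov2]] := spans_of_phi_conf h2.
have [s1 [w1 sz1 cov1]] := spans_of_phi_conf h1.
have [s0 [w0 sz0 cov0]] := spans_of_phi_conf h0.
have lu : uniq [:: c2; c1; c0] by [].
have W := lwalk_snake w2 w1 w0 lu.
have WA := lwalk_vert A (isT : uniq [:: c0; c1; c2]).
apply/coveredP; rewrite ?lay_eqE //; exists (glue (vert A c0 c1 c2) (snake c2 c1 c0 P R s2 s1 s0)).
split; first exact: lwalk_glue WA W.
  by rewrite size_glue (size_snake _ _ _ s2 w1 w0) /=; have := size_layers sz2 sz1 sz0; lia.
move=> v; rewrite -(lay_eta v) !lay_eqE (mem_glue _ WA W) mem_vert // (mem_snake w2 w1 w0 lu).
case: (I3_cases (lst v)) => ->;
  [move: (cov0 (pre v)) | move: (cov1 (pre v)) | move: (cov2 (pre v))];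
  by case/or3P=> [->|/eqP->|/eqP->]; rewrite ?eqxx ?orbT.
Qed.

Lemma covered_t3 (a b x y : V n.+2) : config a b x y -> t3 a b x y -> covered a b x y.
Proof.
move=> [[_ ax _] [_ b_y _]] [la lx lb ly]; move: ax b_y.
rewrite -(lay_eta a) -(lay_eta b) -(lay_eta x) -(lay_eta y) la lx lb ly !lay_eqE !eqxx /=.
move: (pre a) (pre b) (pre x) (pre y) => A B X Y ax b_y {la lx lb ly a b x y}.
have [P [R [V' [S [/and3P [h0 h1 h2] E]]]]] := t3_split_exists n_gt1 ax b_y.
have [s0 [w0 sz0 cov0]] := spans_of_phi_conf h0.
have [s1 [w1 sz1 cov1]] := spans_of_phi_conf h1.
have [s2 [w2 sz2 cov2]] := spans_of_phi_conf h2.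
have w2' := lwalk_glue w2 (lwalk_edge E).
have lu : uniq [:: c0; c2; c1] by [].
have W := lwalk_snake w0 w2' w1 lu.
apply/coveredP; rewrite ?lay_eqE //; exists (snake c0 c2 c1 P R s0 (glue s2 [:: V'; S; R]) s1).
split=> //.
  by rewrite (size_snake _ _ _ s0 w2' w1) size_glue /=; have := size_layers sz0 sz2 sz1; lia.
move=> v; rewrite -(lay_eta v) !lay_eqE (mem_snake w0 w2' w1 lu).
rewrite (mem_glue _ w2 (lwalk_edge E)) !inE.
case: (I3_cases (lst v)) => ->;
  [move: (cov0 (pre v)) | move: (cov1 (pre v)) | move: (cov2 (pre v))];
  by case/or3P=> [->|/eqP->|/eqP->]; rewrite ?eqxx ?orbT.
Qed.
End Step.

Lemma pre_to_last_max m pi (v : V m.+1) : pre (to_last ord_max pi v) = pre v.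
Proof. by apply/ffunP => i; rewrite pre_to_last tperm1 perm1 ffunE. Qed.

Section Reductions.
Variable n : nat.
Hypothesis covered_t1 : forall a b x y : V n.+2, t1 a b x y -> covered a b x y.
Hypothesis covered_t2 : forall a b x y : V n.+2, t2 a b x y -> covered a b x y.

(* Exchanging the values 0 and 1 of the last coordinate turns t4 into t1 with
   [a] and [b] exchanged. *)
Lemma covered_t4 (a b x y : V n.+2) : config a b x y -> t4 a b x y -> covered a b x y.
Proof.
move=> C [la lb lx ly hb].
apply: (covered_sym (sg := tperm ord_max ord_max)
  (p := [ffun i => if i == ord_max then perm01 c1 c0 else 1%g]) C).
apply/(covered_rev (config_rev (config_sym _ _ C)))/covered_t1.
by split; rewrite ?lst_to_last -/(lst _) ?la ?lb ?lx ?ly ?permE // !pre_to_last_max.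
Qed.

Lemma covered_t5 (a b x y : V n.+2) : config a b x y -> t5 a b x y -> covered a b x y.
Proof. by move=> C [la lb lx ly hb]; apply/(covered_rev (config_rev C))/covered_t2. Qed.
End Reductions.

Theorem lemma1p5 (n : nat) (hn : 3 <= n) :
  (forall a b x y : V n.+1, config a b x y ->
     of_type (@phi1 n) a b x y \/ of_type (@phi2 n) a b x y \/
     of_type (@phi3 n) a b x y \/ of_type (@phi4 n) a b x y ->
     covered a b x y) ->
  forall a b x y : V n.+2, config a b x y ->
    of_type (@t1 n.+1) a b x y \/ of_type (@t2 n.+1) a b x y \/
    of_type (@t3 n.+1) a b x y \/ of_type (@t4 n.+1) a b x y \/
    of_type (@t5 n.+1) a b x y ->
    covered a b x y.
Proof.
move=> H a b x y C; have n_gt1 : 2 < n.+1 by lia.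
have T1 := covered_t1 n_gt1 H; have T2 := covered_t2 n_gt1 H.
case=> [T|[T|[T|[T|T]]]]; apply: (covered_of_type _ C T) => a' b' x' y' C'.
- exact: T1.
- exact: T2.
- exact: (covered_t3 n_gt1 H C').
- exact: (covered_t4 T1 C').
- exact: (covered_t5 T2 C').
Qed.
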